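(* Let $\mathsf R\subseteq\{\mathsf e,\mathsf c\}$. Every member of $\mathsf{RLUG}_{\mathsf R}$ is a subalgebra of the $\{\wedge,\vee,\cdot,\backslash,/,1\}$-reduct of some member of $\mathsf{CyInRLUG}_{\mathsf R}$.
   Context: An $r\ell u$-groupoid is an algebra $(A,\wedge,\vee,\cdot,\backslash,/,1)$ with $(A,\wedge,\vee)$ a lattice (order $\le$), $(A,\cdot,1)$ a unital groupoid (binary operation, not necessarily associative, with two-sided unit $1$), and $x\cdot y\le z\iff y\le x\backslash z\iff x\le z/y$. An $r\ell uz$-groupoid is an $r\ell u$-groupoid with an additional arbitrary constant $0$; write ${\sim}x:=x\backslash 0$, $-x:=0/x$. It is involutive if ${\sim}(-x)=x=-({\sim}x)$ and $({\sim}x)/y=x\backslash(-y)$ for all $x,y$; cyclic involutive if moreover ${\sim}x=-x$. Equations: $(\mathsf e)$ $x\cdot y\le y\cdot x$; $(\mathsf c)$ $x\le x\cdot x$. $\mathsf{RLUG}_{\mathsf R}$ is the variety of $r\ell u$-groupoids satisfying $\mathsf R$; $\mathsf{CyInRLUG}_{\mathsf R}$ the variety of cyclic involutive $r\ell uz$-groupoids satisfying $\mathsf R$. The $\mathcal N$-reduct of an algebra forgets the operations outside $\mathcal N$. *)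

Set Implicit Arguments.

Record rlu_ops (A : Type) := RluOps {
  meet : A -> A -> A;
  join : A -> A -> A;
  mul  : A -> A -> A;
  ldiv : A -> A -> A;
  rdiv : A -> A -> A;
  one  : A
}.

Definition le {A} (o : rlu_ops A) (x y : A) : Prop := meet o x y = x.

Definition is_lattice {A} (o : rlu_ops A) : Prop :=
  (forall x y, meet o x y = meet o y x) /\
  (forall x y, join o x y = join o y x) /\
  (forall x y z, meet o x (meet o y z) = meet o (meet o x y) z) /\
  (forall x y z, join o x (join o y z) = join o (join o x y) z) /\
  (forall x y, meet o x (join o x y) = x) /\
  (forall x y, join o x (meet o x y) = x).

Definition is_rlu {A} (o : rlu_ops A) : Prop :=
  is_lattice o /\
  (forall x, mul o (one o) x = x) /\
  (forall x, mul o x (one o) = x) /\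
  (forall x y z, (le o (mul o x y) z <-> le o y (ldiv o x z)) /\
                 (le o (mul o x y) z <-> le o x (rdiv o z y))).

(* Equations in R ⊆ {e, c}: re = (e ∈ R), rc = (c ∈ R). *)
Definition eq_e {A} (o : rlu_ops A) : Prop := forall x y, le o (mul o x y) (mul o y x).
Definition eq_c {A} (o : rlu_ops A) : Prop := forall x, le o x (mul o x x).

Definition sat_R (re rc : bool) {A} (o : rlu_ops A) : Prop :=
  (re = true -> eq_e o) /\ (rc = true -> eq_c o).

Definition lneg {A} (o : rlu_ops A) (z : A) (x : A) : A := ldiv o x z.
Definition rneg {A} (o : rlu_ops A) (z : A) (x : A) : A := rdiv o z x.

Definition is_involutive {A} (o : rlu_ops A) (z : A) : Prop :=
  (forall x, lneg o z (rneg o z x) = x /\ rneg o z (lneg o z x) = x) /\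
  (forall x y, rdiv o (lneg o z x) y = ldiv o x (rneg o z y)).

Definition is_cyinv {A} (o : rlu_ops A) (z : A) : Prop :=
  is_rlu o /\ is_involutive o z /\ (forall x, lneg o z x = rneg o z x).

Definition is_embedding {A B} (oA : rlu_ops A) (oB : rlu_ops B) (f : A -> B) : Prop :=
  (forall x y, f x = f y -> x = y) /\
  (forall x y, f (meet oA x y) = meet oB (f x) (f y)) /\
  (forall x y, f (join oA x y) = join oB (f x) (f y)) /\
  (forall x y, f (mul oA x y) = mul oB (f x) (f y)) /\
  (forall x y, f (ldiv oA x y) = ldiv oB (f x) (f y)) /\
  (forall x y, f (rdiv oA x y) = rdiv oB (f x) (f y)) /\
  f (one oA) = one oB.

(* Adjoin a new bottom and top to A, giving a bounded rlu-groupoid L.  In the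
   twist product of L with its order dual, with zero (top, 1), both negations
   just swap the two coordinates, so it is cyclic involutive; commutativity
   transfers coordinatewise.  Contraction need not hold in the whole twist
   product, but it does on the pairs having top in some coordinate; these form
   a subalgebra containing the zero and the image of the embedding
   a |-> (a, top). *)
From Stdlib Require Import Eqdep_dec Bool Setoid.
Set Implicit Arguments.

Section RluTheory.
Variables (L : Type) (o : rlu_ops L).
Hypothesis rlu_o : is_rlu o.

Lemma meetC x y : meet o x y = meet o y x. Proof. apply rlu_o. Qed.
Lemma joinC x y : join o x y = join o y x. Proof. apply rlu_o. Qed.
Lemma meetA x y z : meet o x (meet o y z) = meet o (meet o x y) z. Proof. apply rlu_o. Qed.
Lemma joinA x y z : join o x (join o y z) = join o (join o x y) z. Proof. apply rlu_o. Qed.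
Lemma meetKU x y : meet o x (join o x y) = x. Proof. apply rlu_o. Qed.
Lemma joinKI x y : join o x (meet o x y) = x. Proof. apply rlu_o. Qed.
Lemma mul1r x : mul o (one o) x = x. Proof. apply rlu_o. Qed.
Lemma mulr1 x : mul o x (one o) = x. Proof. apply rlu_o. Qed.
Lemma ldivP x y z : le o (mul o x y) z <-> le o y (ldiv o x z). Proof. apply rlu_o. Qed.
Lemma rdivP x y z : le o (mul o x y) z <-> le o x (rdiv o z y). Proof. apply rlu_o. Qed.

Lemma meetxx x : meet o x x = x.
Proof.
  transitivity (meet o x (join o x (meet o x x))); [now rewrite joinKI | apply meetKU].
Qed.

Lemma joinxx x : join o x x = x.
Proof.
  transitivity (join o x (meet o x (join o x x))); [now rewrite meetKU | apply joinKI].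
Qed.

Lemma le_refl x : le o x x. Proof. apply meetxx. Qed.

Lemma le_anti x y : le o x y -> le o y x -> x = y.
Proof. unfold le; intros xy yx. rewrite <- xy, meetC. exact yx. Qed.

Lemma le_trans x y z : le o x y -> le o y z -> le o x z.
Proof. unfold le; intros xy yz. rewrite <- xy, <- meetA, yz. reflexivity. Qed.

Lemma le_meetl x y : le o (meet o x y) x.
Proof. unfold le. rewrite (meetC (meet o x y) x), meetA, meetxx. reflexivity. Qed.

Lemma le_meetr x y : le o (meet o x y) y.
Proof. unfold le. rewrite <- meetA, meetxx. reflexivity. Qed.

Lemma le_meetP x y z : le o x (meet o y z) <-> le o x y /\ le o x z.
Proof.
  split.
  - intro xyz. split; eapply le_trans; eauto using le_meetl, le_meetr.
  - unfold le. intros [xy xz]. rewrite meetA, xy, xz. reflexivity.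
Qed.

Lemma le_joinE x y : le o x y <-> join o x y = y.
Proof.
  unfold le; split; intro xy.
  - rewrite <- xy, joinC, meetC. apply joinKI.
  - rewrite <- xy. apply meetKU.
Qed.

Lemma le_lower_set_inj u v : (forall w, le o w u <-> le o w v) -> u = v.
Proof. intro uv. apply le_anti; apply uv, le_refl. Qed.

Lemma rdiv_one x : rdiv o x (one o) = x.
Proof. apply le_lower_set_inj; intro w. rewrite <- rdivP, mulr1. tauto. Qed.

Lemma one_ldiv x : ldiv o (one o) x = x.
Proof. apply le_lower_set_inj; intro w. rewrite <- ldivP, mul1r. tauto. Qed.

Lemma mulC_of_e : eq_e o -> forall x y, mul o x y = mul o y x.
Proof. intros e_o x y. apply le_anti; apply e_o. Qed.

Lemma ldiv_rdiv_of_e : eq_e o -> forall x y, ldiv o x y = rdiv o y x.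
Proof.
  intros e_o x y. apply le_lower_set_inj; intro w.
  rewrite <- ldivP, <- rdivP, (mulC_of_e e_o). tauto.
Qed.

Section Twist.
Variable T : L.
Hypothesis le_top : forall x, le o x T.

Lemma ldiv_top x : ldiv o x T = T.
Proof. apply le_anti; [apply le_top | apply ldivP, le_top]. Qed.

Lemma top_rdiv x : rdiv o T x = T.
Proof. apply le_anti; [apply le_top | apply rdivP, le_top]. Qed.

Lemma meet_topl x : meet o T x = x.
Proof. rewrite meetC. apply le_top. Qed.

(* Pairs (a, b) live in L x L^op: the second coordinate is ordered dually. *)
Definition twist : rlu_ops (L * L) := RluOps
  (fun p q => (meet o (fst p) (fst q), join o (snd p) (snd q)))
  (fun p q => (join o (fst p) (fst q), meet o (snd p) (snd q)))
  (fun p q => (mul o (fst p) (fst q),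
               meet o (ldiv o (fst q) (snd p)) (rdiv o (snd q) (fst p))))
  (fun p q => (meet o (ldiv o (fst p) (fst q)) (rdiv o (snd p) (snd q)),
               mul o (snd q) (fst p)))
  (fun q p => (meet o (rdiv o (fst q) (fst p)) (ldiv o (snd q) (snd p)),
               mul o (fst p) (snd q)))
  (one o, T).

Definition twist_zero : L * L := (T, one o).

Lemma twist_leP p q : le twist p q <-> le o (fst p) (fst q) /\ le o (snd q) (snd p).
Proof.
  destruct p as [a b], q as [c d]; unfold le; simpl; split.
  - intro pq. injection pq as ac bd. split; [exact ac|].
    apply le_joinE. rewrite joinC. exact bd.
  - intros [ac db]. apply le_joinE in db. rewrite joinC in db.
    unfold le in ac. rewrite ac, db. reflexivity.
Qed.

Lemma twist_rlu : is_rlu twist.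
Proof.
  split; [|split; [|split]].
  - repeat split; intros [? ?]; try intros [? ?]; try intros [? ?]; simpl; f_equal;
      first [apply meetC | apply joinC | apply meetA | apply joinA
            | apply meetKU | apply joinKI].
  - intros [c d]; simpl. rewrite mul1r, ldiv_top, rdiv_one, meet_topl. reflexivity.
  - intros [a b]; simpl. rewrite mulr1, one_ldiv, top_rdiv, meetC, meet_topl.
    reflexivity.
  - intros [a b] [x y] [c d]. rewrite !twist_leP; simpl. rewrite !le_meetP.
    rewrite <- !ldivP, <- !rdivP. tauto.
Qed.

Lemma twist_neg p :
  lneg twist twist_zero p = (snd p, fst p) /\ rneg twist twist_zero p = (snd p, fst p).
Proof.
  destruct p as [a b]; unfold lneg, rneg, twist_zero; simpl.
  rewrite ldiv_top, rdiv_one, meet_topl, mul1r, top_rdiv, one_ldiv, meet_topl, mulr1.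
  auto.
Qed.

Lemma twist_cyinv : is_cyinv twist twist_zero.
Proof.
  split; [apply twist_rlu | split; [split|]].
  - intro p. destruct (twist_neg p) as [-> ->].
    destruct (twist_neg (snd p, fst p)) as [-> ->]. destruct p; auto.
  - intros [a b] [c d]. destruct (twist_neg (a, b)) as [-> _].
    destruct (twist_neg (c, d)) as [_ ->]. simpl. f_equal. apply meetC.
  - intro p. destruct (twist_neg p) as [-> ->]. reflexivity.
Qed.

Lemma twist_e : eq_e o -> eq_e twist.
Proof.
  intros e_o [a b] [c d]. apply twist_leP; simpl. split.
  - rewrite (mulC_of_e e_o). apply le_refl.
  - rewrite !(ldiv_rdiv_of_e e_o), meetC. apply le_refl.
Qed.

End Twist.
End RluTheory.

Inductive bounded (A : Type) := Bot | Elt (a : A) | Top.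
Arguments Bot {A}. Arguments Top {A}. Arguments Elt {A} a.

Section Bounded.
Variables (A : Type) (o : rlu_ops A).
Hypothesis rlu_o : is_rlu o.

Definition bmeet (x y : bounded A) : bounded A :=
  match x, y with
  | Bot, _ | _, Bot => Bot
  | Top, y => y
  | x, Top => x
  | Elt a, Elt b => Elt (meet o a b)
  end.

Definition bjoin (x y : bounded A) : bounded A :=
  match x, y with
  | Top, _ | _, Top => Top
  | Bot, y => y
  | x, Bot => x
  | Elt a, Elt b => Elt (join o a b)
  end.

Definition bmul (x y : bounded A) : bounded A :=
  match x, y with
  | Bot, _ | _, Bot => Bot
  | Top, _ | _, Top => Top
  | Elt a, Elt b => Elt (mul o a b)
  end.

Definition bldiv (x y : bounded A) : bounded A :=
  match x, y with
  | Bot, _ | _, Top => Top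
  | Top, _ | Elt _, Bot => Bot
  | Elt a, Elt b => Elt (ldiv o a b)
  end.

Definition brdiv (y x : bounded A) : bounded A :=
  match y, x with
  | _, Bot | Top, _ => Top
  | _, Top | Bot, Elt _ => Bot
  | Elt b, Elt a => Elt (rdiv o b a)
  end.

Definition bounded_ops : rlu_ops (bounded A) :=
  RluOps bmeet bjoin bmul bldiv brdiv (Elt (one o)).

Definition ble (x y : bounded A) : Prop :=
  match x, y with
  | Bot, _ | _, Top => True
  | Elt a, Elt b => le o a b
  | _, _ => False
  end.

Lemma bounded_leP x y : le bounded_ops x y <-> ble x y.
Proof.
  unfold le; destruct x, y; simpl; split; intro h; try discriminate; auto;
    try (injection h; auto); try (rewrite h; auto); contradiction.
Qed.

Lemma bounded_rlu : is_rlu bounded_ops.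
Proof.
  split; [|split; [|split]].
  - repeat split; intros; repeat match goal with x : bounded A |- _ => destruct x end;
      simpl; try reflexivity; f_equal; 
      first [apply (meetC rlu_o) | apply (joinC rlu_o) | apply (meetA rlu_o)
            | apply (joinA rlu_o) | apply (meetKU rlu_o) | apply (joinKI rlu_o)
            | apply (meetxx rlu_o) | apply (joinxx rlu_o)].
  - intros []; simpl; rewrite ?(mul1r rlu_o); reflexivity.
  - intros []; simpl; rewrite ?(mulr1 rlu_o); reflexivity.
  - intros x y z. rewrite !bounded_leP.
    destruct x, y, z; simpl; try tauto; split; [apply (ldivP rlu_o) | apply (rdivP rlu_o)].
Qed.

Lemma bounded_le_top x : le bounded_ops x Top.
Proof. apply bounded_leP. destruct x; exact I. Qed.

Lemma bounded_e : eq_e o -> eq_e bounded_ops.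
Proof. intros e_o [] []; apply bounded_leP; simpl; auto. Qed.

Lemma bounded_c : eq_c o -> eq_c bounded_ops.
Proof. intros c_o []; apply bounded_leP; simpl; auto. Qed.

End Bounded.

Section Subalgebra.
Variables (B : Type) (oB : rlu_ops B) (z : B) (P : B -> bool).
Hypothesis P_meet : forall x y, P x = true -> P y = true -> P (meet oB x y) = true.
Hypothesis P_join : forall x y, P x = true -> P y = true -> P (join oB x y) = true.
Hypothesis P_mul : forall x y, P x = true -> P y = true -> P (mul oB x y) = true.
Hypothesis P_ldiv : forall x y, P x = true -> P y = true -> P (ldiv oB x y) = true.
Hypothesis P_rdiv : forall x y, P x = true -> P y = true -> P (rdiv oB x y) = true.
Hypothesis P_one : P (one oB) = true.
Hypothesis P_zero : P z = true.

Definition sub := {x : B | P x = true}.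

Definition sub_op (op : B -> B -> B)
    (P_op : forall x y, P x = true -> P y = true -> P (op x y) = true) (x y : sub) : sub :=
  exist _ (op (proj1_sig x) (proj1_sig y)) (P_op _ _ (proj2_sig x) (proj2_sig y)).

Definition sub_ops : rlu_ops sub :=
  RluOps (sub_op (meet oB) P_meet) (sub_op (join oB) P_join) (sub_op (mul oB) P_mul)
    (sub_op (ldiv oB) P_ldiv) (sub_op (rdiv oB) P_rdiv) (exist _ (one oB) P_one).

Definition sub_zero : sub := exist _ z P_zero.

Lemma sub_val_inj (x y : sub) : proj1_sig x = proj1_sig y -> x = y.
Proof.
  destruct x as [x Px], y as [y Py]; simpl; intros <-.
  f_equal. apply UIP_dec, bool_dec.
Qed.

Lemma sub_leP x y : le sub_ops x y <-> le oB (proj1_sig x) (proj1_sig y).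
Proof.
  unfold le; split; intro xy.
  - apply (f_equal (@proj1_sig _ _)) in xy. exact xy.
  - apply sub_val_inj. exact xy.
Qed.

Lemma sub_cyinv : is_cyinv oB z -> is_cyinv sub_ops sub_zero.
Proof.
  intros [[lat [m1 [m2 res]]] [[inv dm] cy]].
  destruct lat as (mC & jC & mA & jA & mKU & jKI).
  split; [split; [|split; [|split]] | split; [split|]].
  - repeat split; intros; apply sub_val_inj;
      first [apply mC | apply jC | apply mA | apply jA | apply mKU | apply jKI].
  - intro x. apply sub_val_inj, m1.
  - intro x. apply sub_val_inj, m2.
  - intros x y w. rewrite !sub_leP. apply res.
  - intro x. split; apply sub_val_inj, inv.
  - intros x y. apply sub_val_inj, dm.
  - intro x. apply sub_val_inj, cy.
Qed.

Lemma sub_e : eq_e oB -> eq_e sub_ops.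
Proof. intros e_oB x y. apply sub_leP, e_oB. Qed.

Lemma sub_c : (forall x, P x = true -> le oB x (mul oB x x)) -> eq_c sub_ops.
Proof. intros c_P x. apply sub_leP, c_P, proj2_sig. Qed.

Lemma sub_corestrict_embedding (A : Type) (oA : rlu_ops A) (f : A -> B) :
  is_embedding oA oB f -> (forall a, P (f a) = true) ->
  exists g : A -> sub, is_embedding oA sub_ops g.
Proof.
  intros (f_inj & f_meet & f_join & f_mul & f_ldiv & f_rdiv & f_one) Pf.
  exists (fun a => exist _ (f a) (Pf a)).
  split.
  - intros a b gab. apply f_inj. apply (f_equal (@proj1_sig _ _)) in gab. exact gab.
  - repeat split; intros; apply sub_val_inj; simpl; auto.
Qed.

End Subalgebra.

Section Construction.
Variables (A : Type) (o : rlu_ops A).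
Hypothesis rlu_o : is_rlu o.

Definition btwist := twist (bounded_ops o) Top.

Definition has_top_coord (p : bounded A * bounded A) : bool :=
  match p with
  | (Top, _) | (_, Top) => true
  | _ => false
  end.

Ltac top_coord_cases :=
  intros [a b] [c d]; destruct a, b, c, d; simpl; intros; try discriminate; reflexivity.

Lemma top_coord_meet : forall p q, has_top_coord p = true -> has_top_coord q = true ->
  has_top_coord (meet btwist p q) = true.
Proof. top_coord_cases. Qed.

Lemma top_coord_join : forall p q, has_top_coord p = true -> has_top_coord q = true ->
  has_top_coord (join btwist p q) = true.
Proof. top_coord_cases. Qed.

Lemma top_coord_mul : forall p q, has_top_coord p = true -> has_top_coord q = true ->
  has_top_coord (mul btwist p q) = true.
Proof. top_coord_cases. Qed.

Lemma top_coord_ldiv : forall p q, has_top_coord p = true -> has_top_coord q = true ->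
  has_top_coord (ldiv btwist p q) = true.
Proof. top_coord_cases. Qed.

Lemma top_coord_rdiv : forall p q, has_top_coord p = true -> has_top_coord q = true ->
  has_top_coord (rdiv btwist p q) = true.
Proof. top_coord_cases. Qed.

(* [Top] absorbs every [Elt a] under [bmul], so images keep [Top] as second
   coordinate under products and quotients. *)
Lemma pair_top_embedding : is_embedding o btwist (fun a => (Elt a, Top)).
Proof.
  split; [intros a b ab; injection ab; auto | repeat split].
Qed.

Lemma top_coord_c : eq_c o ->
  forall p, has_top_coord p = true -> le btwist p (mul btwist p p).
Proof.
  intros c_o [a b] top_ab. apply (twist_leP (bounded_rlu rlu_o)); simpl.
  rewrite !bounded_leP. destruct a, b; simpl in *; try discriminate; auto.
Qed.

End Construction.

Theorem mainTheorem12 :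
  forall (re rc : bool) (A : Type) (oA : rlu_ops A),
    is_rlu oA -> sat_R re rc oA ->
    exists (B : Type) (oB : rlu_ops B) (z : B),
      is_cyinv oB z /\ sat_R re rc oB /\
      exists f : A -> B, is_embedding oA oB f.
Proof.
  intros re rc A oA rlu_oA [e_oA c_oA].
  assert (rlu_B : is_rlu (bounded_ops oA)) by exact (bounded_rlu rlu_oA).
  exists (sub (@has_top_coord A)),
    (sub_ops (btwist oA) (@has_top_coord A) (@top_coord_meet A oA) (@top_coord_join A oA)
       (@top_coord_mul A oA) (@top_coord_ldiv A oA) (@top_coord_rdiv A oA) eq_refl),
    (sub_zero (twist_zero (bounded_ops oA) Top) (@has_top_coord A) eq_refl).
  split; [|split; [split|]].
  - apply sub_cyinv, (twist_cyinv rlu_B), bounded_le_top.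
  - intro re_true. apply sub_e, (twist_e rlu_B), bounded_e, e_oA, re_true.
  - intro rc_true. apply sub_c, top_coord_c, c_oA; assumption.
  - apply sub_corestrict_embedding with (f := fun a => (Elt a, Top));
      [apply pair_top_embedding | reflexivity].
Qed.
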